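(* Let $A\in\mathbb{R}^{n\times n}$, $B\in\mathbb{R}^{n\times m}$, $C\in\mathbb{R}^{p\times n}$ with $(A,C)$ observable, $\ell$ its observability index, and $\mathbf{A}_\ell,\mathbf{B}_\ell,Z_\ell$ as in the context. For each $\hat x\in\mathbb{R}^n$ and each sequence $\{u(k)\}_{k=0}^\infty$ there exists $\hat\xi$ such that the solution $x(\cdot)$ of $x^+=Ax+Bu$ with $x(0)=\hat x$, its output $y(\cdot)=Cx(\cdot)$, and the solution $\xi(\cdot)$ of $\xi^+=\mathbf{A}_\ell\xi+\mathbf{B}_\ell v$ with $\xi(\ell)=\hat\xi$ and input $v(k)=u(k)$ for $k\ge\ell$ satisfy, for all $k\ge\ell$, $\xi(k)=(y(k-\ell),\dots,y(k-1),u(k-\ell),\dots,u(k-1))$ and $y(k)=Z_\ell\xi(k)$.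
   Context: $(v_1,\dots,v_r)$ denotes a stacked column vector. The observability index $\ell$ is the smallest $l$ with $\operatorname{rank}[C;CA;\dots;CA^{l-1}]=n$. Define $\mathcal{O}_\ell=[C;CA;\dots;CA^{\ell-1}]$; $\mathcal{T}_\ell\in\mathbb{R}^{p\ell\times m\ell}$ block lower triangular with $(i,j)$ block $CA^{i-j-1}B$ if $i>j$ and $0$ otherwise; $\mathcal{R}_\ell=[A^{\ell-1}B\ \cdots\ AB\ B]$; $\mathcal{O}_\ell^{L}$ a fixed left inverse of $\mathcal{O}_\ell$. $\mathbf{F}_\ell=\mathrm{blockdiag}(S_p,S_m)$ where $S_q\in\mathbb{R}^{q\ell\times q\ell}$ has blocks $I_q$ at block positions $(i,i+1)$, $i=1,\dots,\ell-1$, zeros elsewhere; $\mathbf{L}_\ell\in\mathbb{R}^{(p\ell+m\ell)\times p}$ has $I_p$ in rows $p\ell-p+1,\dots,p\ell$, zeros elsewhere; $\mathbf{B}_\ell\in\mathbb{R}^{(p\ell+m\ell)\times m}$ has $I_m$ in its last $m$ rows, zeros elsewhere. $Z_\ell=[CA^\ell\mathcal{O}_\ell^L\ \ C\mathcal{R}_\ell-CA^\ell\mathcal{O}_\ell^L\mathcal{T}_\ell]$, $\mathbf{A}_\ell=\mathbf{F}_\ell+\mathbf{L}_\ell Z_\ell$. *)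

From HB Require Import structures.
From mathcomp Require Import all_boot all_order all_algebra.
Set Implicit Arguments. Unset Strict Implicit. Unset Printing Implicit Defensive.
Import Order.TTheory GRing.Theory Num.Theory.
Local Open Scope ring_scope.

Section Defs.
Variable R : realFieldType.

(* Entry access of a matrix by natural-number indices (0 if out of range). *)
Definition nat_entry (a b : nat) (M : 'M[R]_(a, b)) (i j : nat) : R :=
  match @insub _ (fun k => k < a)%N 'I_a i, @insub _ (fun k => k < b)%N 'I_b j with
  | Some i', Some j' => M i' j'
  | _, _ => 0
  end.

Variables (n m p : nat).

(* Observability matrix O_l = [C; CA; ...; CA^(l-1)] : (p*l) x n.
   Row r lies in block r %/ p, at position r %% p inside the block. *)
Definition obs_mx (l : nat) (A : 'M[R]_n) (C : 'M[R]_(p, n)) : 'M[R]_(p * l, n) :=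
  \matrix_(i, j) nat_entry (C *m A ^+ (i %/ p)) (i %% p) j.

Definition is_obs_index (A : 'M[R]_n) (C : 'M[R]_(p, n)) (l : nat) : Prop :=
  \rank (obs_mx l A C) = n /\ (forall l', (l' < l)%N -> (\rank (obs_mx l' A C) < n)%N).

Definition observable (A : 'M[R]_n) (C : 'M[R]_(p, n)) : Prop :=
  \rank (obs_mx n A C) = n.

(* T_l : block lower triangular, (i,j) block = C A^(i-j-1) B if i > j, else 0. *)
Definition toep_mx (l : nat) (A : 'M[R]_n) (B : 'M[R]_(n, m)) (C : 'M[R]_(p, n))
  : 'M[R]_(p * l, m * l) :=
  \matrix_(i, j)
    if (j %/ m < i %/ p)%N
    then nat_entry (C *m A ^+ (i %/ p - j %/ m).-1 *m B) (i %% p) (j %% m)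
    else 0.

(* R_l = [A^(l-1)B ... AB B] : n x (m*l). *)
Definition reach_mx (l : nat) (A : 'M[R]_n) (B : 'M[R]_(n, m)) : 'M[R]_(n, m * l) :=
  \matrix_(i, j) nat_entry (A ^+ (l - (j %/ m).+1) *m B) i (j %% m).

(* S_q : (q*l) x (q*l), identity blocks at block positions (i, i+1). *)
Definition shift_mx (q l : nat) : 'M[R]_(q * l) :=
  \matrix_(i, j) ((((i %/ q).+1 == j %/ q) && (i %% q == j %% q))%N)%:R.

(* E : (q*l) x q with I_q in its last q rows. *)
Definition last_block_mx (q l : nat) : 'M[R]_(q * l, q) :=
  \matrix_(i, j) (((i %/ q == l.-1) && (i %% q == j))%N)%:R.

Definition F_mx (l : nat) : 'M[R]_(p * l + m * l) :=
  block_mx (shift_mx p l) 0 0 (shift_mx m l).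

Definition L_mx (l : nat) : 'M[R]_(p * l + m * l, p) :=
  col_mx (last_block_mx p l) 0.

Definition B_mx (l : nat) : 'M[R]_(p * l + m * l, m) :=
  col_mx 0 (last_block_mx m l).

Definition Z_mx (l : nat) (A : 'M[R]_n) (B : 'M[R]_(n, m)) (C : 'M[R]_(p, n))
  (OL : 'M[R]_(n, p * l)) : 'M[R]_(p, p * l + m * l) :=
  row_mx (C *m A ^+ l *m OL)
         (C *m reach_mx l A B - C *m A ^+ l *m OL *m toep_mx l A B C).

Definition A_mx (l : nat) (A : 'M[R]_n) (B : 'M[R]_(n, m)) (C : 'M[R]_(p, n))
  (OL : 'M[R]_(n, p * l)) : 'M[R]_(p * l + m * l) :=
  F_mx l + L_mx l *m Z_mx A B C OL.

(* Stacked vector (y(k-l), ..., y(k-1), u(k-l), ..., u(k-1)). *)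
Definition past_window (l k : nat) (y : nat -> 'cV[R]_p) (u : nat -> 'cV[R]_m)
  : 'cV[R]_(p * l + m * l) :=
  col_mx (\col_i nat_entry (y (k - l + i %/ p)%N) (i %% p) 0)
         (\col_i nat_entry (u (k - l + i %/ m)%N) (i %% m) 0).

End Defs.

From HB Require Import structures.
From mathcomp Require Import all_boot all_order all_algebra zify.
Import Order.TTheory GRing.Theory Num.Theory.
Local Open Scope ring_scope.
Set Implicit Arguments. Unset Strict Implicit. Unset Printing Implicit Defensive.

(* Stack the last l outputs and inputs of a trajectory into the window
   xi(k) = (y(k-l), ..., y(k-1), u(k-l), ..., u(k-1)).  Passing from xi(k) to
   xi(k+1) shifts both halves up by one block and appends y(k) and u(k); this is
   F_l xi + L_l y(k) + B_l u(k).  It remains to see that y(k) = Z_l xi(k): the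
   output half of xi(k) equals O_l x(k-l) + T_l (input half), so O_l^L recovers
   x(k-l), and x(k) = A^l x(k-l) + R_l (input half).  Hence the window is a
   solution of the xi-system, and it is the only one with the same value at l. *)

Lemma big_nat_blocks (T : Type) (idx : T) (op : Monoid.law idx) (F : nat -> T) q l :
  \big[op/idx]_(0 <= j < q * l) F j =
  \big[op/idx]_(0 <= t < l) \big[op/idx]_(0 <= c < q) F (t * q + c)%N.
Proof.
elim: l => [|l IHl]; first by rewrite muln0 !big_nil.
rewrite mulnS addnC (big_cat_nat _ (leq_addr _ _)) //= IHl big_nat_recr //=.
congr (op _ _); rewrite -{1}[(q * l)%N]add0n big_addn addKn.
by apply: eq_bigr => c _; rewrite addnC mulnC.
Qed.

Lemma divn_block q t c : (c < q)%N -> ((t * q + c) %/ q)%N = t.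
Proof. by move=> lt_cq; rewrite divnMDl ?divn_small ?addn0 //; apply: leq_ltn_trans lt_cq. Qed.

Lemma modn_block q t c : (c < q)%N -> ((t * q + c) %% q)%N = c.
Proof. by move=> lt_cq; rewrite modnMDl modn_small. Qed.

Lemma block_index_lt q l t c : (t < l)%N -> (c < q)%N -> (t * q + c < q * l)%N.
Proof. by move=> *; nia. Qed.

Lemma eq_block_index q t c k : (c < q)%N ->
  (k == t * q + c)%N = (k %/ q == t)%N && (k %% q == c)%N.
Proof.
move=> lt_cq; apply/eqP/andP => [-> | [/eqP <- /eqP <-]].
  by rewrite divn_block ?modn_block.
exact: divn_eq.
Qed.

Section NatEntry.
Variable R : realFieldType.
Implicit Types a b c : nat.

Lemma nat_entry_ord a b (M : 'M[R]_(a, b)) (i : 'I_a) (j : 'I_b) : nat_entry M i j = M i j.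
Proof. by rewrite /nat_entry !valK. Qed.

Lemma nat_entry_in a b (M : 'M[R]_(a, b)) i j (lt_ia : (i < a)%N) (lt_jb : (j < b)%N) :
  nat_entry M i j = M (Ordinal lt_ia) (Ordinal lt_jb).
Proof. exact: nat_entry_ord M (Ordinal lt_ia) (Ordinal lt_jb). Qed.

Lemma nat_entry_out a b (M : 'M[R]_(a, b)) i j :
  (a <= i)%N || (b <= j)%N -> nat_entry M i j = 0.
Proof.
rewrite /nat_entry; case: insubP => [i' _ <-|//]; case: insubP => [j' _ <-|//].
by rewrite leqNgt ltn_ord leqNgt ltn_ord.
Qed.

Lemma nat_entryD a b (M N : 'M[R]_(a, b)) i j :
  nat_entry (M + N) i j = nat_entry M i j + nat_entry N i j.
Proof.
case: (ltnP i a) => [lt_ia|le_ai]; last by rewrite !nat_entry_out ?le_ai ?addr0.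
case: (ltnP j b) => [lt_jb|le_bj]; last by rewrite !nat_entry_out ?le_bj ?orbT ?addr0.
by rewrite !(nat_entry_in _ lt_ia lt_jb) mxE.
Qed.

Lemma nat_entry_sum a b k (M : nat -> 'M[R]_(a, b)) i j :
  nat_entry (\sum_(0 <= t < k) M t) i j = \sum_(0 <= t < k) nat_entry (M t) i j.
Proof.
elim: k => [|k IHk]; last by rewrite !big_nat_recr //= nat_entryD IHk.
rewrite !big_nil; case: (ltnP i a) => [lt_ia|le_ai]; last by rewrite nat_entry_out ?le_ai.
case: (ltnP j b) => [lt_jb|le_bj]; last by rewrite nat_entry_out ?le_bj ?orbT.
by rewrite (nat_entry_in _ lt_ia lt_jb) mxE.
Qed.

Lemma nat_entry_mul a b c (M : 'M[R]_(a, b)) (N : 'M[R]_(b, c)) i j :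
  nat_entry (M *m N) i j = \sum_(0 <= k < b) nat_entry M i k * nat_entry N k j.
Proof.
case: (ltnP i a) => [lt_ia|le_ai]; last first.
  by rewrite nat_entry_out ?le_ai // big1 // => k _; rewrite (nat_entry_out M) ?le_ai ?mul0r.
case: (ltnP j c) => [lt_jc|le_cj]; last first.
  rewrite nat_entry_out ?le_cj ?orbT // big1 // => k _.
  by rewrite (nat_entry_out N) ?le_cj ?orbT ?mulr0.
rewrite (nat_entry_in _ lt_ia lt_jc) mxE big_mkord.
by apply: eq_bigr => k _; rewrite -!nat_entry_ord.
Qed.

Lemma col_nat_entryP a (v w : 'cV[R]_a) :
  (forall i, (i < a)%N -> nat_entry v i 0 = nat_entry w i 0) -> v = w.
Proof.
move=> eq_vw; apply/matrixP => i j; rewrite (ord1 j) -!nat_entry_ord.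
exact: eq_vw.
Qed.

End NatEntry.

Section Blocks.
Variable R : realFieldType.

Definition row_block (q t : nat) a c (M : 'M[R]_(a, c)) : 'M[R]_(q, c) :=
  \matrix_(r, j) nat_entry M (t * q + r) j.

Definition col_block (q t : nat) a c (M : 'M[R]_(a, c)) : 'M[R]_(a, q) :=
  \matrix_(i, k) nat_entry M i (t * q + k).

Definition window q l (f : nat -> 'cV[R]_q) (s : nat) : 'cV[R]_(q * l) :=
  \col_i nat_entry (f (s + i %/ q)%N) (i %% q) 0.

Lemma eq_window q l (f g : nat -> 'cV[R]_q) s : f =1 g -> window l f s = window l g s.
Proof. by move=> eq_fg; apply/matrixP => i j; rewrite !mxE eq_fg. Qed.

Lemma past_windowE p m l k (y : nat -> 'cV[R]_p) (u : nat -> 'cV[R]_m) :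
  past_window l k y u = col_mx (window l y (k - l)) (window l u (k - l)).
Proof. by []. Qed.

Lemma nat_entry_row_block q t a c (M : 'M[R]_(a, c)) r j :
  (r < q)%N -> nat_entry (row_block q t M) r j = nat_entry M (t * q + r) j.
Proof.
move=> lt_rq; case: (ltnP j c) => [lt_jc|le_cj].
  by rewrite (nat_entry_in _ lt_rq lt_jc) mxE.
by rewrite !nat_entry_out ?le_cj ?orbT.
Qed.

Lemma nat_entry_col_block q t a c (M : 'M[R]_(a, c)) i k :
  (k < q)%N -> nat_entry (col_block q t M) i k = nat_entry M i (t * q + k).
Proof.
move=> lt_kq; case: (ltnP i a) => [lt_ia|le_ai].
  by rewrite (nat_entry_in _ lt_ia lt_kq) mxE.
by rewrite !nat_entry_out ?le_ai.
Qed.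

Lemma nat_entry_window q l (f : nat -> 'cV[R]_q) s i : (i < q * l)%N ->
  nat_entry (window l f s) i 0 = nat_entry (f (s + i %/ q)%N) (i %% q) 0.
Proof. by move=> lt_i; rewrite (nat_entry_in _ lt_i (ltn0Sn 0)) mxE. Qed.

Lemma row_blockD q t a c (M N : 'M[R]_(a, c)) :
  row_block q t (M + N) = row_block q t M + row_block q t N.
Proof. by apply/matrixP => r j; rewrite !mxE nat_entryD. Qed.

Lemma row_block_mul q t a b c (M : 'M[R]_(a, b)) (N : 'M[R]_(b, c)) :
  row_block q t (M *m N) = row_block q t M *m N.
Proof.
apply/matrixP => r j; rewrite !mxE nat_entry_mul big_mkord.
by apply: eq_bigr => k _; rewrite mxE !nat_entry_ord.
Qed.

Lemma eq_row_blocks q l c (M N : 'M[R]_(q * l, c)) :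
  (forall t, (t < l)%N -> row_block q t M = row_block q t N) -> M = N.
Proof.
move=> eqMN; apply/matrixP => i j.
have q_gt0 : (0 < q)%N by case: q i {M N eqMN} => [[]|].
have lt_il : (i %/ q < l)%N by rewrite ltn_divLR // (mulnC l q).
have := congr1 (fun X : 'M_(q, c) => X (Ordinal (ltn_pmod i q_gt0)) j) (eqMN _ lt_il).
by rewrite !mxE /= -divn_eq !nat_entry_ord.
Qed.

Lemma mulmx_window q l a (M : 'M[R]_(a, q * l)) (f : nat -> 'cV[R]_q) s :
  M *m window l f s = \sum_(0 <= t < l) col_block q t M *m f (s + t)%N.
Proof.
apply: col_nat_entryP => i _; rewrite nat_entry_mul nat_entry_sum big_nat_blocks.
apply: eq_big_nat => t /andP[_ lt_tl]; rewrite nat_entry_mul.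
apply: eq_big_nat => c /andP[_ lt_cq].
by rewrite nat_entry_col_block // nat_entry_window ?block_index_lt // divn_block ?modn_block.
Qed.

Lemma row_block_window q l (f : nat -> 'cV[R]_q) s t :
  (t < l)%N -> row_block q t (window l f s) = f (s + t)%N.
Proof.
move=> lt_tl; apply/matrixP => r z; rewrite (ord1 z) mxE -(nat_entry_ord (f _) r ord0).
by rewrite nat_entry_window ?block_index_lt // divn_block ?modn_block.
Qed.

Lemma row_block_shift q l c (v : 'M[R]_(q * l, c)) t : (t < l)%N ->
  row_block q t (shift_mx R q l *m v) = if (t.+1 < l)%N then row_block q t.+1 v else 0.
Proof.
move=> lt_tl; rewrite row_block_mul; apply/matrixP => r j; rewrite mxE.
transitivity (\sum_(k < q * l | k == (t.+1 * q + r)%N :> nat) nat_entry v k j).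
  rewrite [in RHS]big_mkcond /=; apply: eq_bigr => k _.
  rewrite mxE (nat_entry_in _ (block_index_lt lt_tl (ltn_ord r)) (ltn_ord k)) mxE /=.
  rewrite divn_block // modn_block // eq_block_index // (eq_sym t.+1) (eq_sym (nat_of_ord r)).
  by case: (_ && _); rewrite ?mul1r ?mul0r ?nat_entry_ord.
rewrite (big_ord1_eq _ (fun k => nat_entry v k j)); case: (ltnP t.+1 l) => [lt_t1l|le_lt1].
  by rewrite block_index_lt // mxE.
by rewrite ifF ?mxE //; apply/negbTE; rewrite -leqNgt; nia.
Qed.

Lemma row_block_last q l c (y : 'M[R]_(q, c)) t : (t < l)%N ->
  row_block q t (last_block_mx R q l *m y) = if t.+1 == l then y else 0.
Proof.
move=> lt_tl; rewrite row_block_mul; apply/matrixP => r j; rewrite mxE.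
transitivity ((t.+1 == l)%:R * \sum_(k < q | k == r :> nat) nat_entry y k j).
  rewrite [in RHS]big_mkcond mulr_sumr /=; apply: eq_bigr => k _.
  rewrite mxE (nat_entry_in _ (block_index_lt lt_tl (ltn_ord r)) (ltn_ord k)) mxE /=.
  rewrite divn_block // modn_block // (eq_sym (nat_of_ord r)).
  have -> : (t == l.-1) = (t.+1 == l) by case: l lt_tl.
  by case: (t.+1 == l); case: (k == r :> nat); rewrite /= ?mul1r ?mul0r ?nat_entry_ord.
rewrite (big_ord1_eq _ (fun k => nat_entry y k j)) ltn_ord nat_entry_ord.
by case: (t.+1 == l); [rewrite mul1r | rewrite mul0r mxE].
Qed.

Lemma window_succ q l (f : nat -> 'cV[R]_q) s :
  window l f s.+1 = shift_mx R q l *m window l f s + last_block_mx R q l *m f (s + l)%N.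
Proof.
apply: eq_row_blocks => t lt_tl.
rewrite row_blockD row_block_shift // row_block_last // row_block_window // addSnnS.
case: (ltnP t.+1 l) => [lt_t1l|le_lt1].
  by rewrite ltn_eqF // addr0 row_block_window.
have eq_t1l : t.+1 == l by rewrite eqn_leq lt_tl le_lt1.
by rewrite eq_t1l add0r (eqP eq_t1l).
Qed.

End Blocks.

Lemma mulmx_exprS (R : pzRingType) n (M : 'M[R]_n) k : M *m M ^+ k = M ^+ k.+1.
Proof. by rewrite exprS mulmxE. Qed.

Section System.
Variables (R : realFieldType) (n m p : nat).
Variables (A : 'M[R]_n) (B : 'M[R]_(n, m)) (C : 'M[R]_(p, n)).

Definition lti_solution (x0 : 'cV[R]_n) (w : nat -> 'cV[R]_m) (k : nat) : 'cV[R]_n :=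
  A ^+ k *m x0 + \sum_(0 <= t < k) A ^+ (k - t.+1) *m B *m w t.

Variables (x : nat -> 'cV[R]_n) (u : nat -> 'cV[R]_m).
Hypothesis x_step : forall k, x k.+1 = A *m x k + B *m u k.

Lemma trajectoryE s k : x (s + k)%N = lti_solution (x s) (fun t => u (s + t)%N) k.
Proof.
elim: k => [|k IHk]; first by rewrite /lti_solution addn0 expr0 mul1mx big_nil addr0.
rewrite /lti_solution addnS x_step IHk mulmxDr mulmxA mulmx_exprS.
rewrite big_nat_recr //= subnn expr0 mul1mx addrA; congr (_ + _ + _).
rewrite mulmx_sumr; apply: eq_big_nat => t /andP[_ lt_tk].
by rewrite !mulmxA mulmx_exprS subSn.
Qed.

Lemma col_block_reach l t : (t < l)%N -> col_block m t (reach_mx l A B) = A ^+ (l - t.+1) *m B.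
Proof.
move=> lt_tl; apply/matrixP => i c; rewrite mxE.
rewrite (nat_entry_in _ (ltn_ord i) (block_index_lt lt_tl (ltn_ord c))) mxE /=.
by rewrite divn_block // modn_block // nat_entry_ord.
Qed.

Lemma row_block_obs l t : (t < l)%N -> row_block p t (obs_mx l A C) = C *m A ^+ t.
Proof.
move=> lt_tl; apply/matrixP => r j; rewrite mxE.
rewrite (nat_entry_in _ (block_index_lt lt_tl (ltn_ord r)) (ltn_ord j)) mxE /=.
by rewrite divn_block // modn_block // nat_entry_ord.
Qed.

Lemma toep_mx_block l t b : (t < l)%N -> (b < l)%N ->
  col_block m b (row_block p t (toep_mx l A B C)) =
  if (b < t)%N then C *m A ^+ (t - b.+1) *m B else 0.
Proof.
move=> lt_tl lt_bl; apply/matrixP => r c; rewrite mxE nat_entry_row_block //.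
rewrite (nat_entry_in _ (block_index_lt lt_tl (ltn_ord r)) (block_index_lt lt_bl (ltn_ord c))).
rewrite mxE /= !divn_block // !modn_block //.
by case: ifP => _; rewrite ?subnS ?nat_entry_ord ?mxE.
Qed.

Lemma reach_window s l : A ^+ l *m x s + reach_mx l A B *m window l u s = x (s + l)%N.
Proof.
rewrite mulmx_window trajectoryE; congr (_ + _).
by apply: eq_big_nat => t /andP[_ lt_tl]; rewrite col_block_reach.
Qed.

Lemma output_window s l :
  window l (fun j => C *m x j) s = obs_mx l A C *m x s + toep_mx l A B C *m window l u s.
Proof.
apply: eq_row_blocks => t lt_tl.
rewrite row_blockD !row_block_mul row_block_window // row_block_obs // mulmx_window.
rewrite trajectoryE /lti_solution mulmxDr mulmxA; congr (_ + _).
rewrite (big_cat_nat _ (ltnW lt_tl)) //= [X in _ = _ + X]big_nat_cond.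
rewrite [X in _ = _ + X]big1 => [|b /andP[/andP[le_tb lt_bl] _]]; last first.
  by rewrite toep_mx_block // ltnNge le_tb mul0mx.
rewrite addr0 mulmx_sumr; apply: eq_big_nat => b /andP[_ lt_bt].
by rewrite toep_mx_block ?lt_bt ?(ltn_trans lt_bt lt_tl) // !mulmxA.
Qed.

Variables (l : nat) (OL : 'M[R]_(n, p * l)).
Hypothesis OL_left_inv : OL *m obs_mx l A C = 1%:M.

Lemma Z_mx_past_window k :
  (l <= k)%N -> Z_mx A B C OL *m past_window l k (fun j => C *m x j) u = C *m x k.
Proof.
move=> le_lk; rewrite past_windowE output_window /Z_mx mul_row_col mulmxDr mulmxBl.
rewrite !mulmxA -[C *m A ^+ l *m OL *m _]mulmxA OL_left_inv mulmx1.
rewrite addrACA subrr addr0 -!mulmxA -mulmxDr reach_window subnK //.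
Qed.

Lemma A_mx_past_window k : (l <= k)%N ->
  A_mx A B C OL *m past_window l k (fun j => C *m x j) u + B_mx R m p l *m u k =
  past_window l k.+1 (fun j => C *m x j) u.
Proof.
move=> le_lk; rewrite /A_mx mulmxDl -mulmxA Z_mx_past_window //.
rewrite !past_windowE subSn // !window_succ subnK //.
rewrite /F_mx /L_mx /B_mx mul_block_col !mul_col_mx !mul0mx.
by rewrite !add_col_mx !addr0 !add0r.
Qed.

End System.

Theorem lemma3 (R : realFieldType) (n m p : nat)
  (A : 'M[R]_n) (B : 'M[R]_(n, m)) (C : 'M[R]_(p, n)) (l : nat)
  (OL : 'M[R]_(n, p * l)) :
  observable A C ->
  is_obs_index A C l ->
  OL *m obs_mx l A C = 1%:M ->
  forall (xhat : 'cV[R]_n) (u : nat -> 'cV[R]_m),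
  exists xihat : 'cV[R]_(p * l + m * l),
    forall (x : nat -> 'cV[R]_n) (xi : nat -> 'cV[R]_(p * l + m * l)),
      x 0%N = xhat ->
      (forall k, x k.+1 = A *m x k + B *m u k) ->
      xi l = xihat ->
      (forall k, (l <= k)%N -> xi k.+1 = A_mx A B C OL *m xi k + B_mx R m p l *m u k) ->
      forall k, (l <= k)%N ->
        xi k = past_window l k (fun j => C *m x j) u /\
        C *m x k = Z_mx A B C OL *m xi k.
Proof.
move=> _ _ OL_left_inv xhat u.
exists (past_window l l (fun j => C *m lti_solution A B xhat u j) u).
move=> x xi x0 x_step xi_l xi_step.
have x_sol j : x j = lti_solution A B xhat u j.
  by rewrite -[j]add0n (trajectoryE x_step) x0.
have xi_window k : (l <= k)%N -> xi k = past_window l k (fun j => C *m x j) u.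
  move=> /subnK <-; elim: (k - l)%N => [|d IHd].
    by rewrite add0n xi_l !past_windowE (eq_window _ _ (fun j => congr1 _ (x_sol j))).
  by rewrite addSn xi_step ?leq_addl // IHd A_mx_past_window ?leq_addl.
move=> k le_lk; split; first exact: xi_window.
by rewrite xi_window // Z_mx_past_window.
Qed.
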